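(* Let $X\sim N(-\mu,\sigma^2)$ with $\mu\ge0$ and $\sigma>0$. Then for every $0\le\epsilon\le1$, $$\mathbb P\Big(0\le X\le\epsilon\big(\sigma\wedge\tfrac{\sigma^2}{\mu}\big)\Big)\ge\frac{\epsilon}{5}\,\mathbb P(X\ge0),$$ with the convention $\sigma^2/0=\infty$. *)

From HB Require Import structures.
From mathcomp Require Import all_boot all_order all_algebra.
From mathcomp Require Import all_classical all_reals all_analysis.
Set Implicit Arguments. Unset Strict Implicit. Unset Printing Implicit Defensive.
Import Order.TTheory GRing.Theory Num.Theory.
Local Open Scope ring_scope.

(* sigma /\ sigma^2/mu, with the convention sigma^2/0 = +oo, so the value is
   sigma when mu = 0. *)
Definition scale_bound {R : realType} (mu sigma : R) : R :=
  if mu == 0 then sigma else Num.min sigma (sigma ^+ 2 / mu).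

From HB Require Import structures.
From mathcomp Require Import all_boot all_order all_algebra.
From mathcomp Require Import all_classical all_reals all_analysis.
From mathcomp Require Import ring lra measurable_realfun.
Import Order.TTheory GRing.Theory Num.Theory.
Import numFieldNormedType.Exports.
Local Open Scope classical_set_scope.
Local Open Scope ring_scope.

(* Let f be the density of N(-mu, sigma^2) and b := sigma /\ sigma^2/mu.  Then
   f is nonincreasing on [0, +oo[ and 2 b mu + b^2 >= sigma^2, so that
   f (x + b) <= e^(-1/2) f x <= 4/5 f x for x >= 0.  Shifting the tail by b
   gives P(X >= b) <= 4/5 P(X >= 0), i.e. P(0 <= X <= b) >= P(X >= 0) / 5.
   Finally, a nonincreasing density puts at least the fraction eps of the mass
   of [0, b] on [0, eps b]: its average over [0, eps b] is at least f (eps b),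
   which bounds its average over ]eps b, b]. *)

Lemma lebesgue_measure_itv_length {R : realType} (x y : bool) (a b : R) :
  a <= b -> lebesgue_measure [set` Interval (BSide x a) (BSide y b)] = (b - a)%:E.
Proof.
rewrite lebesgue_measure_itv/= lte_fin le_eqVlt => /predU1P[<-|->].
  by rewrite ltxx subrr.
by rewrite EFinB.
Qed.

Section nonnegative_density.
Context {R : realType} (f : R -> R).
Hypotheses (f_ge0 : forall x, 0 <= f x) (f_cont : continuous f).
Local Notation mu := (@lebesgue_measure R).

Let mf (D : set R) : measurable_fun D (fun x => (f x)%:E : \bar R).
Proof.
by apply/measurable_EFinP/measurable_funTS; exact: continuous_measurable_fun.
Qed.

Lemma ge0_integral_itvy_shift (b : R) :
  (\int[mu]_(x in `[b, +oo[) (f x)%:E =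
   \int[mu]_(x in `[0%R, +oo[) (f (x + b))%:E)%E.
Proof.
have dshift : ((fun x : R => x + b)^`())%classic = cst 1.
  by apply/funext => x; rewrite derive1E deriveD// derive_id derive_cst addr0.
rewrite -[in LHS](add0r b).
rewrite (@increasing_ge0_integration_by_substitutiony R (fun x => x + b)).
- by apply: eq_integral => x _; rewrite dshift /= mulr1.
- by move=> x y _ _; rewrite ltrD2r.
- by rewrite dshift => x _; exact: cst_continuous.
- by rewrite dshift; exact: is_cvg_cst.
- by rewrite dshift; exact: is_cvg_cst.
- split; first by move=> x _; apply: derivableD.
  by apply: cvg_at_right_filter; apply: cvgD; [exact: cvg_id|exact: cvg_cst].
- exact: cvg_addrr.
- by move=> x; exact: continuous_subspaceT.
- by move=> x _; exact: f_ge0.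
Qed.

Lemma integral_itvy_shift_le (b k : R) : 0 <= k ->
  (forall x, 0 <= x -> f (x + b) <= k * f x) ->
  (\int[mu]_(x in `[b, +oo[) (f x)%:E <=
   k%:E * \int[mu]_(x in `[0%R, +oo[) (f x)%:E)%E.
Proof.
move=> k0 fk; rewrite ge0_integral_itvy_shift -ge0_integralZl//;
  [|exact: mf|by move=> x _; rewrite lee_fin].
apply: ge0_le_integral => //.
- by move=> x _; rewrite lee_fin.
- apply/measurable_EFinP/measurable_funTS.
  apply: measurableT_comp; first exact: continuous_measurable_fun.
  exact: measurable_funD.
- by apply: emeasurable_funM => //; exact: mf.
- by move=> x; rewrite /= in_itv/= andbT => x0; rewrite -EFinM lee_fin fk.
Qed.

Let integral_ge0f (D : set R) : (0 <= \int[mu]_(x in D) (f x)%:E)%E.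
Proof. by apply: integral_ge0 => x _; rewrite lee_fin. Qed.

Let integral_itv_cst (x y : bool) (a c r : R) : a <= c ->
  (\int[mu]_(t in [set` Interval (BSide x a) (BSide y c)]) r%:E = ((c - a) * r)%:E)%E.
Proof.
by move=> ac; rewrite integral_cst//= (lebesgue_measure_itv_length x y _ _ ac) -EFinM mulrC.
Qed.

Lemma nonincreasing_integral_itv_scale (b eps : R) :
  {in `[0%R, b] &, {homo f : x y /~ x <= y}} -> 0 <= b -> 0 <= eps -> eps <= 1 ->
  (eps%:E * \int[mu]_(x in `[0%R, b]) (f x)%:E <=
   \int[mu]_(x in `[0%R, (eps * b)%R]) (f x)%:E)%E.
Proof.
move=> f_noninc b0 eps0 eps1; set c := eps * b.
have c0 : 0 <= c by rewrite mulr_ge0.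
have cb : c <= b by rewrite ler_piMl.
have cbE : (\int[mu]_(x in `[0%R, b]) (f x)%:E =
    \int[mu]_(x in `[0%R, c]) (f x)%:E + \int[mu]_(x in `]c, b]) (f x)%:E)%E.
  rewrite (@itv_bndbnd_setU _ _ _ (BRight c)) ?bnd_simp//.
  apply: ge0_integral_setU => //; [exact: mf|by move=> x _; rewrite lee_fin|].
  rewrite disj_set2E; apply/eqP/seteqP; split => // x [] /=.
  by rewrite !in_itv/= => /andP[_ xc] /andP[cx _]; move: xc; rewrite leNgt cx.
have lower : ((c * f c)%:E <= \int[mu]_(x in `[0%R, c]) (f x)%:E)%E.
  rewrite -{1}(subr0 c) -(integral_itv_cst true false)//.
  apply: ge0_le_integral => //; [by move=> x _; rewrite lee_fin|exact: mf|].
  move=> x; rewrite /= in_itv/= => /andP[x0 xc]; rewrite lee_fin f_noninc//.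
  by rewrite in_itv/= c0.
  by rewrite in_itv/= x0 (le_trans xc).
have upper : (\int[mu]_(x in `]c, b]) (f x)%:E <= ((b - c) * f c)%:E)%E.
  rewrite -(integral_itv_cst false false)//.
  apply: ge0_le_integral => //; [by move=> x _; rewrite lee_fin|exact: mf|].
  move=> x; rewrite /= in_itv/= => /andP[cx xb]; rewrite lee_fin f_noninc ?ltW//.
  by rewrite in_itv/= xb (le_trans c0 (ltW cx)).
  by rewrite in_itv/= c0.
rewrite cbE ge0_muleDr ?integral_ge0f//.
apply: le_trans (leeD2l _ (lee_wpmul2l _ upper)) _; first by rewrite lee_fin.
have -> : (eps%:E * ((b - c) * f c)%:E = (1 - eps)%:E * (c * f c)%:E)%E.
  by rewrite -!EFinM /c; congr EFin; ring.
apply: le_trans (leeD2l _ (lee_wpmul2l _ lower)) _.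
  by rewrite lee_fin subr_ge0.
by rewrite -ge0_muleDl ?lee_fin ?subr_ge0// -EFinD addrC subrK mul1e.
Qed.

End nonnegative_density.

Lemma finite_measure_itv_ge_of_tail {R : realType}
    (N : {finite_measure set (measurableTypeR R) -> \bar R}) (b k : R) : 0 <= b ->
  (N `[b, +oo[%classic <= k%:E * N `[0%R, +oo[%classic)%E ->
  ((1 - k)%:E * N `[0%R, +oo[%classic <= N `[0%R, b]%classic)%E.
Proof.
move=> b0 tail.
have NE (A : set R) : measurable A -> N A = (fine (N A))%:E.
  by move=> mA; rewrite fineK//; exact: fin_num_measure.
have splitE : N `[0%R, +oo[%classic = (N `[0%R, b[%classic + N `[b, +oo[%classic)%E.
  rewrite (@itv_bndbnd_setU _ _ _ (BLeft b)) ?bnd_simp//.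
  apply: measureU => //; rewrite -subset0 => x [] /=.
  by rewrite !in_itv/= andbT => /andP[_ xb] bx; move: xb; rewrite ltNge bx.
have sub : (N `[0%R, b[%classic <= N `[0%R, b]%classic)%E.
  by apply: le_measure; rewrite ?inE// => x; rewrite /= !in_itv/= => /andP[-> /ltW].
move: splitE sub tail.
rewrite (NE `[0%R, +oo[%classic)// (NE `[0%R, b[%classic)// (NE `[b, +oo[%classic)// (NE `[0%R, b]%classic)//.
rewrite -EFinD -!EFinM !lee_fin => -[eqA] sub tail.
by rewrite mulrBl mul1r lerBlDr {1}eqA lerD.
Qed.

Section normal_pdf_shape.
Context {R : realType} (m s : R).
Hypothesis s0 : s != 0.

Let normal_pdfE x :
  normal_pdf m s x = normal_peak s * expR (- (x - m) ^+ 2 / (s ^+ 2 *+ 2)).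
Proof. by rewrite /normal_pdf (negbTE s0). Qed.

Lemma normal_pdf_nonincreasing :
  {in `[m, +oo[ &, {homo normal_pdf m s : x y /~ x <= y}}.
Proof.
move=> x y; rewrite !in_itv/= !andbT => mx my xy.
rewrite !normal_pdfE ler_wpM2l ?normal_peak_ge0// ler_expR !mulNr lerN2.
rewrite ler_wpM2r ?invr_ge0 ?mulrn_wge0 ?sqr_ge0// ler_sqr ?nnegrE ?subr_ge0//.
by rewrite lerD2r.
Qed.

Lemma normal_pdf_addr x b : normal_pdf m s (x + b) =
  expR (- (2 * b * (x - m) + b ^+ 2) / (s ^+ 2 *+ 2)) * normal_pdf m s x.
Proof.
have sqrE : (x + b - m) ^+ 2 = 2 * b * (x - m) + b ^+ 2 + (x - m) ^+ 2 by ring.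
by rewrite !normal_pdfE mulrCA -expRD -mulrDl -opprD -sqrE.
Qed.

End normal_pdf_shape.

Section scale_bound.
Context {R : realType} {mu sigma : R}.
Hypotheses (mu_ge0 : 0 <= mu) (sigma_gt0 : 0 < sigma).
Local Notation b := (scale_bound mu sigma).

Lemma scale_bound_gt0 : 0 < b.
Proof.
rewrite /scale_bound; have [//|mu_neq0] := eqVneq mu 0.
by rewrite lt_min sigma_gt0 divr_gt0 ?exprn_gt0// lt_def mu_neq0.
Qed.

Lemma sqr_le_scale_bound : sigma ^+ 2 <= 2 * b * mu + b ^+ 2.
Proof.
rewrite /scale_bound; have [->|mu_neq0] := eqVneq mu 0; first by nra.
have mu_gt0 : 0 < mu by rewrite lt_def mu_neq0.
rewrite /Order.min; case: ifPn => [_|_].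
  by have := mulr_ge0 (ltW sigma_gt0) mu_ge0; lra.
rewrite -mulrA divfK ?gt_eqF//.
by have := sqr_ge0 (sigma ^+ 2 / mu); nra.
Qed.

End scale_bound.

Lemma expR_Nhalf_le {R : realType} : expR (- 2^-1) <= 4 / 5 :> R.
Proof.
rewrite expRN -[leRHS]invrK lef_pV2 ?posrE ?expR_gt0// invf_div.
by apply: le_trans (expR_ge1Dx _); lra.
Qed.

Lemma normal_pdf_add_scale_bound {R : realType} (mu sigma x : R) :
  0 <= mu -> 0 < sigma -> 0 <= x ->
  normal_pdf (- mu) sigma (x + scale_bound mu sigma) <=
  4 / 5 * normal_pdf (- mu) sigma x.
Proof.
move=> mu_ge0 sigma_gt0 x_ge0.
have b_gt0 := scale_bound_gt0 mu_ge0 sigma_gt0.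
have sigma_le := sqr_le_scale_bound mu_ge0 sigma_gt0.
rewrite normal_pdf_addr ?gt_eqF// ler_wpM2r ?normal_pdf_ge0//.
apply: le_trans expR_Nhalf_le; rewrite ler_expR mulNr lerN2 opprK.
rewrite ler_pdivlMr ?pmulrn_lgt0 ?exprn_gt0//; nra.
Qed.

Theorem claim3p3 (R : realType) (d : measure_display) (T : measurableType d)
  (P : probability T R) (X : {RV P >-> R}) (mu sigma : R)
  (hmu : 0 <= mu) (hsigma : 0 < sigma)
  (hX : distribution P X = normal_prob (- mu) sigma :> (set R -> \bar R))
  (eps : R) (heps0 : 0 <= eps) (heps1 : eps <= 1) :
  ((eps / 5)%:E * P [set w | (0 <= X w)%R]
     <= P [set w | (0 <= X w <= eps * scale_bound mu sigma)%R])%E.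
Proof.
set b := scale_bound mu sigma; set N := normal_prob (- mu) sigma.
have b_gt0 : 0 < b := scale_bound_gt0 hmu hsigma.
have sigma_neq0 : sigma != 0 by rewrite gt_eqF.
have -> : [set w | 0 <= X w] = X @^-1` `[0%R, +oo[.
  by apply/seteqP; split => w /=; rewrite in_itv/= andbT.
have -> : [set w | 0 <= X w <= eps * b] = X @^-1` `[0%R, eps * b].
  by apply/seteqP; split => w /=; rewrite in_itv.
rewrite -![P (X @^-1` _)]/(distribution P X _) hX -/N.
have tail : (N `[b, +oo[%classic <= (4 / 5)%:E * N `[0%R, +oo[%classic)%E.
  apply: integral_itvy_shift_le => //.
  - exact: normal_pdf_ge0.
  - exact: continuous_normal_pdf.
  - by move=> x; exact: normal_pdf_add_scale_bound.
have head : ((5^-1)%:E * N `[0%R, +oo[%classic <= N `[0%R, b]%classic)%E.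
  have -> : 5^-1 = 1 - 4 / 5 :> R by lra.
  exact: finite_measure_itv_ge_of_tail _ (ltW b_gt0) tail.
have noninc : {in `[0%R, b] &, {homo normal_pdf (- mu) sigma : x y /~ x <= y}}.
  apply: sub_in2 (normal_pdf_nonincreasing (- mu) _ sigma_neq0) => x.
  by rewrite !in_itv/= andbT => /andP[x_ge0 _]; rewrite (le_trans _ x_ge0)// oppr_le0.
have := nonincreasing_integral_itv_scale _ (normal_pdf_ge0 (- mu) sigma)
  (continuous_normal_pdf (m := - mu) sigma_neq0) _ _ noninc (ltW b_gt0) heps0 heps1.
apply: le_trans; rewrite EFinM -muleA lee_wpmul2l// lee_fin.
Qed.
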